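(* Let $\mathbf{Sys}_0(L)$ be the full subcategory of $\mathbf{Sys}(L)$ consisting of $T_0$ affine systems, and let $\mathcal{M}$ be the class of monomorphisms $(f,\varphi)$ of $\mathbf{Sys}_0(L)$ for which the homomorphism $\varphi$ is surjective. Then the $\mathcal{M}$-injective objects of $\mathbf{Sys}_0(L)$ are precisely the retracts (in $\mathbf{Sys}_0(L)$) of powers $\mathsf{S}^I$ ($I$ a set) of the Sierpinski affine system $\mathsf{S}$.
   Context: Fix a variety $\mathbf{A}$ of algebras (a full subcategory of the category of $\Omega$-algebras and homomorphisms closed under products, subalgebras and homomorphic images), in which every algebra is non-empty, which has all set-indexed coproducts $(A_i\xrightarrow{\mu_i}\coprod_iA_i)_i$, and which has a free algebra $S$ over a singleton $\{*\}$ with universal map $\eta:\{*\}\to|S|$. For an algebra $A$ and $a\in A$ let $\overline{a}^A:S\to A$ be the unique homomorphism with $\eta( * )\mapsto a$. Fix an $\mathbf{A}$-algebra $L$ with more than one element; $L^X$ denotes the power algebra. An affine system is $(X,\kappa,A)$ with $X$ a set, $A$ an algebra and $\kappa:A\to L^X$ a homomorphism; a morphism $(f,\varphi):(X_1,\kappa_1,A_1)\to(X_2,\kappa_2,A_2)$ is a map $f:X_1\to X_2$ with a homomorphism $\varphi:A_2\to A_1$ such that $\kappa_1(\varphi(a))(x)=\kappa_2(a)(f(x))$ for all $a\in A_2,x\in X_1$; composition $(g,\psi)\circ(f,\varphi)=(g\circ f,\varphi\circ\psi)$. This is $\mathbf{Sys}(L)$. A system is $T_0$ if for all $x,y\in X$,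 $\kappa(a)(x)=\kappa(a)(y)$ for all $a\in A$ implies $x=y$. An object $C$ is $\mathcal{M}$-injective if for every $m:D\to E$ in $\mathcal{M}$ and every morphism $h:D\to C$ there is a morphism $g:E\to C$ with $g\circ m=h$. The Sierpinski affine system is $\mathsf{S}=(|L|,\kappa_S,S)$ with $\kappa_S:S\to L^{|L|}$ the unique homomorphism with $\kappa_S(s)(a)=\overline{a}^L(s)$ (equivalently $\kappa_S(\eta( * ))=\mathrm{id}_L$). Its power $\mathsf{S}^I$ is the product in $\mathbf{Sys}(L)$, namely $(|L|^I,\theta,\coprod_IS)$ with $\theta(\mu_i(s))(x)=\kappa_S(s)(x_i)$. *)

Unset Implicit Arguments.
Unset Strict Implicit.

Record signature := Signature { op : Type; arity : op -> Type }.

Record alg (Sg : signature) := Alg {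
  car :> Type;
  ops : forall o : op Sg, (@arity Sg o -> car) -> car }.
Arguments ops {Sg} a o _.
Arguments car {Sg} a.
Arguments Alg {Sg} car ops.

Definition is_hom {Sg} (A B : alg Sg) (h : A -> B) : Prop :=
  forall (o : op Sg) (args : @arity Sg o -> A),
    h (ops A o args) = ops B o (fun j => h (args j)).
Arguments is_hom {Sg} A B h.

Definition prod_alg {Sg} (I : Type) (A : I -> alg Sg) : alg Sg :=
  Alg (forall i, A i) (fun o args i => ops (A i) o (fun j => args j i)).

Definition pow_alg {Sg} (L : alg Sg) (X : Type) : alg Sg :=
  prod_alg X (fun _ : X => L).

Definition op_closed {Sg} (A : alg Sg) (P : A -> Prop) : Prop :=
  forall o (args : @arity Sg o -> A), (forall j, P (args j)) -> P (ops A o args).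

Definition sub_alg {Sg} (A : alg Sg) (P : A -> Prop) (HP : op_closed A P) : alg Sg :=
  Alg {x : A | P x}
    (fun o args => exist _ (ops A o (fun j => proj1_sig (args j)))
                           (HP o _ (fun j => proj2_sig (args j)))).

Definition variety {Sg} (V : alg Sg -> Prop) : Prop :=
  (forall (I : Type) (A : I -> alg Sg), (forall i, V (A i)) -> V (prod_alg I A)) /\
  (forall (A : alg Sg) (P : A -> Prop) (HP : op_closed A P),
      V A -> (exists x, P x) -> V (sub_alg A P HP)) /\
  (forall (A B : alg Sg) (h : A -> B),
      V A -> is_hom A B h -> (forall b, exists a, h a = b) -> V B).

Definition all_nonempty {Sg} (V : alg Sg -> Prop) : Prop :=
  forall A, V A -> inhabited (car A).

Definition is_coproduct {Sg} (V : alg Sg -> Prop) (I : Type) (A : I -> alg Sg)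
  (C : alg Sg) (mu : forall i, A i -> C) : Prop :=
  V C /\ (forall i, is_hom (A i) C (mu i)) /\
  forall B : alg Sg, V B -> forall (g : forall i, A i -> B),
    (forall i, is_hom (A i) B (g i)) ->
    (exists h : C -> B, is_hom C B h /\ forall i a, h (mu i a) = g i a) /\
    (forall h1 h2 : C -> B, is_hom C B h1 -> is_hom C B h2 ->
        (forall i a, h1 (mu i a) = g i a) -> (forall i a, h2 (mu i a) = g i a) ->
        forall c, h1 c = h2 c).

Definition has_coproducts {Sg} (V : alg Sg -> Prop) : Prop :=
  forall (I : Type) (A : I -> alg Sg), (forall i, V (A i)) ->
    exists (C : alg Sg) (mu : forall i, A i -> C), is_coproduct V I A C mu.

Definition is_free_singleton {Sg} (V : alg Sg -> Prop) (S : alg Sg) (eta : S) : Prop :=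
  V S /\
  forall B : alg Sg, V B -> forall b : B,
    (exists h : S -> B, is_hom S B h /\ h eta = b) /\
    (forall h1 h2 : S -> B, is_hom S B h1 -> is_hom S B h2 ->
        h1 eta = b -> h2 eta = b -> forall s, h1 s = h2 s).

Section Systems.
Variables (Sg : signature) (V : alg Sg -> Prop) (L : alg Sg).

Record system := mkSys {
  sX : Type;
  sA : alg Sg;
  sAV : V sA;
  kappa : sA -> sX -> L;
  kappa_hom : is_hom sA (pow_alg L sX) kappa }.
Arguments kappa {s} _ _.
Arguments kappa_hom {s} _ _.

Record mor (D E : system) := mkMor {
  mf : sX D -> sX E;
  mphi : sA E -> sA D;
  mphi_hom : is_hom (sA E) (sA D) mphi;
  mcompat : forall (a : sA E) (x : sX D), kappa (mphi a) x = kappa a (mf x) }.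
Arguments mf {D E} _ _.
Arguments mphi {D E} _ _.
Arguments mphi_hom {D E} _ _ _.
Arguments mcompat {D E} _ _ _.

Definition idm (D : system) : mor D D.
Proof.
  refine (@mkMor D D (fun x => x) (fun a => a) _ _).
  - intros o args; reflexivity.
  - intros a x; reflexivity.
Defined.

Definition comp (D E F : system) (g : mor E F) (f : mor D E) : mor D F.
Proof.
  refine (@mkMor D F (fun x => mf g (mf f x)) (fun a => mphi f (mphi g a)) _ _).
  - intros o args. rewrite (mphi_hom g), (mphi_hom f). reflexivity.
  - intros a x. rewrite (mcompat f), (mcompat g). reflexivity.
Defined.
Arguments comp {D E F} g f.

Definition meq (D E : system) (f g : mor D E) : Prop :=
  (forall x, mf f x = mf g x) /\ (forall a, mphi f a = mphi g a).
Arguments meq {D E} f g.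

Definition T0 (D : system) : Prop :=
  forall x y : sX D, (forall a : sA D, kappa a x = kappa a y) -> x = y.

Definition mono0 (D E : system) (m : mor D E) : Prop :=
  forall Z : system, T0 Z -> forall g h : mor Z D,
    meq (comp m g) (comp m h) -> meq g h.
Arguments mono0 {D E} m.

Definition inM (D E : system) (m : mor D E) : Prop :=
  T0 D /\ T0 E /\ mono0 m /\ (forall a : sA D, exists b : sA E, mphi m b = a).
Arguments inM {D E} m.

Definition M_injective0 (C : system) : Prop :=
  forall (D E : system) (m : mor D E), inM m ->
    forall h : mor D C, exists g : mor E C, meq (comp g m) h.

(* retracts in Sys_0(L) (the category is full, so morphisms are those of Sys(L)) *)
Definition retract_of (C P : system) : Prop :=
  T0 C /\ T0 P /\
  exists (s : mor C P) (r : mor P C), meq (comp r s) (idm C).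

(* C is a retract of some power S^I = (|L|^I, theta, coprod_I S) of the
   Sierpinski system S = (|L|, kS, S) *)
Definition retract_of_Sierpinski_power (S : alg Sg)
    (kS : S -> car L -> car L) (C : system) : Prop :=
  exists (I : Type) (Cp : alg Sg) (HCp : V Cp) (mu : I -> S -> Cp)
         (theta : Cp -> (I -> car L) -> car L)
         (Htheta : is_hom Cp (pow_alg L (I -> car L)) theta),
    is_coproduct V I (fun _ : I => S) Cp mu /\
    (forall (i : I) (s : S) (x : I -> car L), theta (mu i s) x = kS s (x i)) /\
    retract_of C (@mkSys (I -> car L) Cp HCp theta Htheta).

End Systems.

Arguments system {Sg} V L.
Arguments T0 {Sg V L} D.
Arguments M_injective0 {Sg V L} C.
Arguments retract_of_Sierpinski_power {Sg V L} S kS C.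

(** A morphism from an affine system [D] into [S^I] is the same thing as an [I]-indexed
    family of elements of the algebra of [D]: the family is read off at the free
    generators [mu i eta] of the coproduct, and conversely induces both components.
    Hence, along an [M]-morphism [m : D -> E], a morphism [D -> S^I] extends to [E]
    by lifting each element of the family through the surjection [mphi m]; so powers
    of [S], and then their retracts, are [M]-injective.  Conversely the family of all
    elements of [A_C] embeds [C] into [S^(A_C)] by an [M]-morphism, and
    [M]-injectivity of [C] yields a retraction. *)
From Stdlib Require Import ssreflect FunctionalExtensionality ClassicalEpsilon.

Local Arguments kappa {Sg V L s} _ _.
Local Arguments kappa_hom {Sg V L s} _ _.
Local Arguments sX {Sg V L} _.
Local Arguments sA {Sg V L} _.
Local Arguments sAV {Sg V L} _.
Local Arguments mkSys {Sg V L} sX sA sAV kappa kappa_hom.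
Local Arguments mf {Sg V L D E} _ _.
Local Arguments mphi {Sg V L D E} _ _.
Local Arguments mphi_hom {Sg V L D E} _ _ _.
Local Arguments mcompat {Sg V L D E} _ _ _.
Local Arguments mkMor {Sg V L D E} mf mphi mphi_hom mcompat.
Local Arguments comp {Sg V L D E F} g f.
Local Arguments meq {Sg V L D E} f g.
Local Arguments inM {Sg V L D E} m.
Local Arguments idm {Sg V L} D.
Local Arguments retract_of {Sg V L} C P.
Local Arguments mono0 {Sg V L D E} m.

Section Homomorphisms.
Context {Sg : signature}.

Lemma is_hom_comp (A B C : alg Sg) (f : A -> B) (g : B -> C) :
  is_hom A B f -> is_hom B C g -> is_hom A C (fun a => g (f a)).
Proof. by move=> Hf Hg o args; rewrite Hf Hg. Qed.

Lemma is_hom_eval (A L : alg Sg) (X : Type) (k : A -> X -> L) (x : X) :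
  is_hom A (pow_alg L X) k -> is_hom A L (fun a => k a x).
Proof. by move=> Hk o args; rewrite Hk. Qed.

Context {V : alg Sg -> Prop}.

Lemma free_hom_unique (S : alg Sg) (eta : S) (B : alg Sg) (h1 h2 : S -> B) :
  is_free_singleton V S eta -> V B -> is_hom S B h1 -> is_hom S B h2 ->
  h1 eta = h2 eta -> forall s, h1 s = h2 s.
Proof. by move=> [_ HS] HB H1 H2 E; apply: (proj2 (HS B HB (h2 eta))). Qed.

Lemma coproduct_hom_unique I (A : I -> alg Sg) (C : alg Sg) (mu : forall i, A i -> C)
    (B : alg Sg) (h1 h2 : C -> B) :
  is_coproduct V I A C mu -> V B -> is_hom C B h1 -> is_hom C B h2 ->
  (forall i a, h1 (mu i a) = h2 (mu i a)) -> forall c, h1 c = h2 c.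
Proof.
move=> [_ [Hmu Hcop]] HB H1 H2 E.
have Hg i : is_hom (A i) B (fun a => h1 (mu i a)) by apply: is_hom_comp.
by apply: (proj2 (Hcop B HB _ Hg)).
Qed.

Lemma coproduct_lift I (A : I -> alg Sg) (C : alg Sg) (mu : forall i, A i -> C)
    (B : alg Sg) (g : forall i, A i -> B) :
  is_coproduct V I A C mu -> V B -> (forall i, is_hom (A i) B (g i)) ->
  exists h : C -> B, is_hom C B h /\ forall i a, h (mu i a) = g i a.
Proof. by move=> [_ [_ Hcop]] HB Hg; apply: (proj1 (Hcop B HB g Hg)). Qed.

Section FreeCopowers.
Context {S : alg Sg} {eta : S} {I : Type} {C : alg Sg} {mu : I -> S -> C}.
Hypotheses (HS : is_free_singleton V S eta)
           (Hcop : is_coproduct V I (fun _ => S) C mu).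

Lemma copower_hom_unique (B : alg Sg) (h1 h2 : C -> B) :
  V B -> is_hom C B h1 -> is_hom C B h2 ->
  (forall i, h1 (mu i eta) = h2 (mu i eta)) -> forall c, h1 c = h2 c.
Proof.
move=> HB H1 H2 E; apply: (coproduct_hom_unique _ _ _ _ _ h1 h2 Hcop) => // i.
have Hmu := proj1 (proj2 Hcop) i.
by apply: (free_hom_unique S eta _ _ _ HS) => //; apply: is_hom_comp.
Qed.

Lemma copower_lift (B : alg Sg) (b : I -> B) :
  V B -> exists h : C -> B, is_hom C B h /\ forall i, h (mu i eta) = b i.
Proof.
move=> HB.
have [g Hg] : exists g : I -> S -> B, forall i, is_hom S B (g i) /\ g i eta = b i.
  by apply: (choice (fun i (g : S -> B) => is_hom S B g /\ g eta = b i)) => i;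
    apply: (proj1 (proj2 HS B HB (b i))).
have [|h [Hh Hhmu]] := coproduct_lift _ _ _ _ _ g Hcop HB; first by move=> i; case: (Hg i).
by exists h; split=> // i; rewrite Hhmu; case: (Hg i).
Qed.

End FreeCopowers.
End Homomorphisms.

Section Injectivity.
Context {Sg : signature} {V : alg Sg -> Prop} {L : alg Sg}.

Lemma retract_M_injective (C P : system V L) :
  retract_of C P -> M_injective0 P -> M_injective0 C.
Proof.
move=> [_ [_ [s [r [Hrs1 Hrs2]]]]] HP D E m Hm h.
have [g [Hg1 Hg2]] := HP D E m Hm (comp s h).
exists (comp r g); split=> /= [x|a].
  by have /= -> := Hg1 x; apply: Hrs1.
by have /= -> := Hg2 (mphi r a); have /= -> := Hrs2 a.
Qed.

Lemma mono0_of_surjective (D E : system V L) (m : mor Sg V L D E) :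
  T0 D -> (forall a, exists b, mphi m b = a) -> mono0 m.
Proof.
move=> HD Hsurj Z _ g h [_ Hphi] /=.
have Egh a : mphi g a = mphi h a by have [b <-] := Hsurj a; apply: Hphi.
split=> // z; apply: HD => a.
by rewrite -(mcompat g a z) -(mcompat h a z) Egh.
Qed.

Context {S : alg Sg} {eta : S} {kS : S -> car L -> car L}.
Hypotheses (HS : is_free_singleton V S eta) (HL : V L)
           (HkS : is_hom S (pow_alg L (car L)) kS)
           (HkSeta : forall a : car L, kS eta a = a).

Section SierpinskiPower.
Context {I : Type} {Cp : alg Sg} {HCp : V Cp} {mu : I -> S -> Cp}
        {theta : Cp -> (I -> car L) -> car L}
        {Htheta : is_hom Cp (pow_alg L (I -> car L)) theta}.
Hypotheses (Hcp : is_coproduct V I (fun _ => S) Cp mu)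
           (Hth : forall (i : I) (s : S) (x : I -> car L), theta (mu i s) x = kS s (x i)).

Let SI : system V L := mkSys (I -> car L) Cp HCp theta Htheta.

Lemma theta_generator i (x : I -> car L) : theta (mu i eta) x = x i.
Proof. by rewrite Hth HkSeta. Qed.

Lemma power_T0 : T0 SI.
Proof.
move=> x y Exy; apply: functional_extensionality => i.
by rewrite -!theta_generator; apply: Exy.
Qed.

Lemma power_mor_ext (D : system V L) (f g : mor Sg V L D SI) :
  (forall i, mphi f (mu i eta) = mphi g (mu i eta)) -> meq f g.
Proof.
move=> E; split=> [x|].
  apply: functional_extensionality => i.
  move: (mcompat f (mu i eta) x) (mcompat g (mu i eta) x) => /=.
  by rewrite !theta_generator E => <- <-.
exact: (copower_hom_unique HS Hcp _ _ _ (sAV D) (mphi_hom f) (mphi_hom g) E).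
Qed.

(* The point component is forced by [theta_generator]; compatibility is checked on
   the generators [mu i eta], where both sides evaluate to [kappa (b i) y]. *)
Lemma power_mor_of_family (E : system V L) (b : I -> sA E) :
  exists f : mor Sg V L E SI, forall i, mphi f (mu i eta) = b i.
Proof.
have [phi [Hphi Hphimu]] := copower_lift HS Hcp _ b (sAV E).
pose fx y i := kappa (b i) y.
have Hcompat c y : kappa (phi c) y = theta c (fx y).
  have Hkappa : is_hom Cp L (fun c => kappa (phi c) y).
    exact: (is_hom_comp _ _ _ _ _ Hphi (is_hom_eval _ _ _ _ y (@kappa_hom _ _ _ E))).
  apply: (copower_hom_unique HS Hcp L _ _ HL Hkappa (is_hom_eval _ _ _ _ _ Htheta)) => i.
  by rewrite Hphimu theta_generator.
by exists (mkMor (E := SI) fx phi Hphi Hcompat).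
Qed.

Lemma power_M_injective : M_injective0 SI.
Proof.
move=> D E m [_ [_ [_ Hsurj]]] h.
have [b Hb] : exists b : I -> sA E, forall i, mphi m (b i) = mphi h (mu i eta).
  by apply: (choice (fun i (c : sA E) => mphi m c = mphi h (mu i eta))) => i.
have [f Hf] := power_mor_of_family E b.
by exists f; apply: power_mor_ext => i /=; rewrite Hf Hb.
Qed.

End SierpinskiPower.

Lemma Sierpinski_power_exists (HV : variety V) (Hcop : has_coproducts V) (I : Type) :
  exists (Cp : alg Sg) (mu : I -> S -> Cp) (theta : Cp -> (I -> car L) -> car L),
    is_coproduct V I (fun _ => S) Cp mu /\
    is_hom Cp (pow_alg L (I -> car L)) theta /\
    forall i s x, theta (mu i s) x = kS s (x i).
Proof.
have [Cp [mu Hcp]] := Hcop I (fun _ => S) (fun _ => proj1 HS).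
have HLI : V (pow_alg L (I -> car L)) by apply: (proj1 HV) => _.
have Hproj i : is_hom S (pow_alg L (I -> car L)) (fun s x => kS s (x i)).
  by move=> o args; apply: functional_extensionality => x /=; rewrite HkS.
have [theta [Htheta Hthmu]] := coproduct_lift _ _ _ _ _ _ Hcp HLI Hproj.
by exists Cp, mu, theta; split=> //; split=> // i s x; rewrite Hthmu.
Qed.

Lemma M_injective_retract_of_power (HV : variety V) (Hcop : has_coproducts V)
    (C : system V L) :
  T0 C -> M_injective0 C -> retract_of_Sierpinski_power S kS C.
Proof.
move=> HC HM.
have [Cp [mu [theta [Hcp [Htheta Hth]]]]] := Sierpinski_power_exists HV Hcop (sA C).
pose SI := mkSys (sA C -> car L) Cp (proj1 Hcp) theta Htheta.
have HSI : T0 SI := power_T0 Hth.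
have [e He] :=
  power_mor_of_family (HCp := proj1 Hcp) (Htheta := Htheta) Hcp Hth C (fun a => a).
have Hsurj a : exists c, mphi e c = a by exists (mu a eta); apply: He.
have HeM : inM e by do 3!split=> //; exact: mono0_of_surjective.
have [r Hr] := HM C SI e HeM (idm C).
by exists (sA C), Cp, (proj1 Hcp), mu, theta, Htheta; do 4!split=> //; exists e, r.
Qed.

End Injectivity.

Theorem theorem3
  (Sg : signature) (V : alg Sg -> Prop)
  (HV : variety V) (Hne : all_nonempty V) (Hcop : has_coproducts V)
  (S : alg Sg) (eta : S) (HS : is_free_singleton V S eta)
  (L : alg Sg) (HL : V L) (HL2 : exists x y : car L, x <> y)
  (kS : S -> car L -> car L)
  (HkS : is_hom S (pow_alg L (car L)) kS)
  (HkSeta : forall a : car L, kS eta a = a)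
  (C : system V L) (HC : T0 C) :
  M_injective0 C <-> retract_of_Sierpinski_power S kS C.
Proof.
split; first exact: M_injective_retract_of_power HS HL HkS HkSeta HV Hcop C HC.
move=> [I [Cp [HCp [mu [theta [Htheta [Hcp [Hth Hretract]]]]]]]].
apply: (retract_M_injective _ _ Hretract).
exact: power_M_injective HS HL HkSeta I Cp HCp mu theta Htheta Hcp Hth.
Qed.
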